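(* (i) If $n\ge 2$ is even, there is a locally finite $n$-distributive variety which is not $(n-1)$-directed-distributive. (ii) For every $n\ge 2$ there is a locally finite $n$-directed-distributive variety which is not $(2n-2)$-alvin, hence not $(2n-3)$-distributive. (iii) More generally, for every $n\ge2$ there is a locally finite $n$-directed-distributive variety in which the congruence identity $\alpha(\beta\circ\gamma)\subseteq(\alpha(\gamma\circ\beta))^{n-1}$ fails.
   Context: Ternary terms $t_0,\dots,t_n$ with $t_0(x,y,z)=x$, $t_n(x,y,z)=z$, $t_h(x,y,x)=x$ for all $h$ are: J\'onsson terms if moreover $t_h(x,x,z)=t_{h+1}(x,x,z)$ for even $h$ and $t_h(x,z,z)=t_{h+1}(x,z,z)$ for odd $h$ ($0\le h<n$); alvin terms if even/odd are exchanged there; directed J\'onsson terms if $t_h(x,z,z)=t_{h+1}(x,x,z)$ for all $0\le h<n$. A variety is $n$-distributive, $n$-alvin, $n$-directed-distributive if it has, respectively, J\'onsson, alvin, directed J\'onsson terms $t_0,\dots,t_n$. In congruence identities juxtaposition is intersection, $\circ$ composition, $R^k$ the $k$-fold composition of $R$. *)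

From mathcomp Require Import all_boot.
Set Implicit Arguments. Unset Strict Implicit. Unset Printing Implicit Defensive.

Record signature := Signature { op : Type; arity : op -> nat }.

Inductive term (S : signature) (X : Type) : Type :=
| Var : X -> term S X
| App : forall f : op S, ('I_(arity f) -> term S X) -> term S X.
Arguments Var {S X} x.
Arguments App {S X} f args.

Record algebra (S : signature) := Algebra {
  carrier :> Type;
  interp : forall f : op S, ('I_(arity f) -> carrier) -> carrier }.
Arguments interp {S} a f _.

Fixpoint eval (S : signature) (X : Type) (A : algebra S) (v : X -> A)
  (t : term S X) : A :=
  match t with
  | Var x => v x
  | App f args => interp A f (fun i => @eval S X A v (args i))
  end.
Arguments eval {S X} A v t.

Definition equation (S : signature) := (term S nat * term S nat)%type.

Definition satisfies (S : signature) (A : algebra S) (e : equation S) : Prop :=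
  forall v : nat -> A, eval A v e.1 = eval A v e.2.

Definition variety_of (S : signature) (Sigma : equation S -> Prop)
  : algebra S -> Prop :=
  fun A => forall e, Sigma e -> satisfies A e.

Definition finite_type (A : Type) : Prop :=
  exists (m : nat) (f : 'I_m -> A), forall a : A, exists i, f i = a.

Definition generated_by (S : signature) (A : algebra S) (k : nat)
  (g : 'I_k -> A) : Prop :=
  forall a : A, exists t : term S 'I_k, eval A g t = a.

Definition locally_finite (S : signature) (V : algebra S -> Prop) : Prop :=
  forall A : algebra S, V A ->
  forall (k : nat) (g : 'I_k -> A), @generated_by S A k g -> finite_type A.

Definition xyz (A : Type) (x y z : A) : 'I_3 -> A :=
  fun i => match nat_of_ord i with 0 => x | 1 => y | _ => z end.

Definition ev3 (S : signature) (A : algebra S) (t : term S 'I_3) (x y z : A) : A :=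
  eval A (xyz x y z) t.

Definition base_conds (S : signature) (V : algebra S -> Prop) (n : nat)
  (t : nat -> term S 'I_3) : Prop :=
  (forall A, V A -> forall x y z : A, ev3 (t 0) x y z = x) /\
  (forall A, V A -> forall x y z : A, ev3 (t n) x y z = z) /\
  (forall h, h <= n -> forall A, V A -> forall x y : A, ev3 (t h) x y x = x).

Definition jonsson_terms (S : signature) (V : algebra S -> Prop) (n : nat)
  (t : nat -> term S 'I_3) : Prop :=
  base_conds V n t /\
  forall h, h < n -> forall A, V A -> forall x z : A,
    if ~~ odd h then ev3 (t h) x x z = ev3 (t h.+1) x x z
    else ev3 (t h) x z z = ev3 (t h.+1) x z z.

Definition alvin_terms (S : signature) (V : algebra S -> Prop) (n : nat)
  (t : nat -> term S 'I_3) : Prop :=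
  base_conds V n t /\
  forall h, h < n -> forall A, V A -> forall x z : A,
    if odd h then ev3 (t h) x x z = ev3 (t h.+1) x x z
    else ev3 (t h) x z z = ev3 (t h.+1) x z z.

Definition directed_jonsson_terms (S : signature) (V : algebra S -> Prop)
  (n : nat) (t : nat -> term S 'I_3) : Prop :=
  base_conds V n t /\
  forall h, h < n -> forall A, V A -> forall x z : A,
    ev3 (t h) x z z = ev3 (t h.+1) x x z.

Definition n_distributive (S : signature) (V : algebra S -> Prop) (n : nat) :=
  exists t, jonsson_terms V n t.
Definition n_alvin (S : signature) (V : algebra S -> Prop) (n : nat) :=
  exists t, alvin_terms V n t.
Definition n_directed_distributive (S : signature) (V : algebra S -> Prop) (n : nat) :=
  exists t, directed_jonsson_terms V n t.

Definition relint (A : Type) (R T : A -> A -> Prop) : A -> A -> Prop :=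
  fun x y => R x y /\ T x y.
Definition relcomp (A : Type) (R T : A -> A -> Prop) : A -> A -> Prop :=
  fun x z => exists y, R x y /\ T y z.
Fixpoint relpow (A : Type) (k : nat) (R : A -> A -> Prop) : A -> A -> Prop :=
  match k with
  | 0 => fun x y => x = y
  | 1 => R
  | k'.+1 => relcomp (relpow k' R) R
  end.

Definition is_congruence (S : signature) (A : algebra S) (R : A -> A -> Prop) :=
  (forall x, R x x) /\ (forall x y, R x y -> R y x) /\
  (forall x y z, R x y -> R y z -> R x z) /\
  (forall f (u w : 'I_(arity f) -> A), (forall i, R (u i) (w i)) ->
     R (interp A f u) (interp A f w)).

Definition cong_id_holds_in (S : signature) (A : algebra S) (k : nat) : Prop :=
  forall alpha beta gamma : A -> A -> Prop,
    @is_congruence S A alpha -> @is_congruence S A beta -> @is_congruence S A gamma ->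
    forall x y, relint alpha (relcomp beta gamma) x y ->
                relpow k (relint alpha (relcomp gamma beta)) x y.

Definition cong_id_holds (S : signature) (V : algebra S -> Prop) (k : nat) : Prop :=
  forall A, V A -> @cong_id_holds_in S A k.

(** All three counterexamples are varieties generated by one finite algebra
    on the chain [{0, ..., N}] with countably many ternary basic operations
    [F_h].  The basic terms [h(x,y,z)] themselves are the (directed) Jonsson
    terms, so the positive halves reduce to arithmetic identities of the
    [F_h].  For the negative halves we use a ternary relation [Q] on the chain
    preserved by all [F_h]: the subalgebra of the cube it defines lies in the
    variety, so every ternary term [t] satisfies
    [Q (t(0,0,N)) (t(0,N,N)) (t(0,N,0))].  When [t(x,y,x) = x] this bounds
    the gap between the "probes" [t(0,0,N)] and [t(0,N,N)], and a chain of
    terms from [x] to [z] can then only advance slowly, hence must be long. *)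

From Stdlib Require Import FunctionalExtensionality ClassicalEpsilon Classical.
From mathcomp Require Import all_boot zify.
Set Implicit Arguments. Unset Strict Implicit. Unset Printing Implicit Defensive.

Section FiniteAlgebraVariety.
Variable S : signature.

Fixpoint rename (X Y : Type) (r : X -> Y) (t : term S X) : term S Y :=
  match t with
  | Var x => Var (r x)
  | App f args => App f (fun i => rename r (args i))
  end.

Lemma eval_rename (A : algebra S) (X Y : Type) (r : X -> Y) (v : Y -> A)
  (t : term S X) : eval A v (rename r t) = eval A (fun x => v (r x)) t.
Proof.
elim: t => [x|f args IH] //=.
by congr (interp A f); apply: functional_extensionality => i; apply: IH.
Qed.

(** The variety generated by a finite algebra [Afin] is the class of all
    algebras satisfying the identities of [Afin]. *)
Variables (T : finType) (ops : forall f : op S, ('I_(arity f) -> T) -> T).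
Definition Afin : algebra S := Algebra ops.
Definition identities_of : equation S -> Prop := satisfies Afin.
Notation Vfin := (variety_of identities_of).

Lemma Afin_in_variety : Vfin Afin.
Proof. by []. Qed.

Lemma identity_transfer (k : nat) (t1 t2 : term S 'I_k) :
  (forall w : 'I_k -> T, eval Afin w t1 = eval Afin w t2) ->
  forall B, Vfin B -> forall g : 'I_k -> B, eval B g t1 = eval B g t2.
Proof.
move=> E B VB g.
pose e : equation S := (rename (@nat_of_ord k) t1, rename (@nat_of_ord k) t2).
have He : identities_of e by move=> v; rewrite /= !eval_rename; apply: E.
pose v m := if insub m is Some i then g i else eval B g t1.
have -> : g = (fun i => v (nat_of_ord i)).
  by apply: functional_extensionality => i; rewrite /v valK.
by have := VB e He v; rewrite /= !eval_rename.
Qed.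

(** The generated variety is locally finite: a member generated by [k]
    elements is an image of the finite set of [k]-ary term functions of
    [Afin], because terms inducing the same term function of [Afin] take the
    same value at the generators. *)
Lemma variety_locally_finite : locally_finite Vfin.
Proof.
move=> B VB k g gen.
case: (classic (exists b : B, True)) => [[b0 _]|B_empty]; last first.
  have no_index : 'I_0 -> B by case=> m; rewrite ltn0.
  by exists 0, no_index => a; case: B_empty; exists a.
pose TF := {ffun {ffun 'I_k -> T} -> T}.
pose tf (t : term S 'I_k) : TF := [ffun w : {ffun 'I_k -> T} => eval Afin w t].
have tf_eval t1 t2 : tf t1 = tf t2 -> eval B g t1 = eval B g t2.
  move=> E; apply: identity_transfer => // w.
  have := congr1 (fun F : TF => F [ffun i => w i]) E; rewrite !ffunE.
  by have -> : [ffun i => w i] = w :> ('I_k -> T)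
    by apply: functional_extensionality => i; rewrite ffunE.
pose realize (F : TF) : B :=
  match excluded_middle_informative (exists t, tf t = F) with
  | left H => eval B g (proj1_sig (constructive_indefinite_description _ H))
  | right _ => b0 end.
exists #|TF|, (fun i => realize (enum_val i)) => a.
have [t <-] := gen a.
exists (enum_rank (tf t)); rewrite enum_rankK /realize.
case: excluded_middle_informative => [H|[]]; last by exists t.
by case: constructive_indefinite_description => t' /= /tf_eval.
Qed.

Lemma identity3_transfer (t1 t2 : term S 'I_3) (a1 b1 c1 a2 b2 c2 : 'I_3) :
  (forall u : 'I_3 -> T,
      ev3 (A := Afin) t1 (u a1) (u b1) (u c1) =
     ev3 (A := Afin) t2 (u a2) (u b2) (u c2)) ->
  forall B, Vfin B -> forall u : 'I_3 -> B,
    ev3 t1 (u a1) (u b1) (u c1) = ev3 t2 (u a2) (u b2) (u c2).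
Proof.
have ev3E (A : algebra S) t (u : 'I_3 -> A) a b c :
    ev3 t (u a) (u b) (u c) = eval A u (rename (xyz a b c) t).
  rewrite eval_rename /ev3; congr eval.
  by apply: functional_extensionality => -[[|[|m]] Hm].
move=> E B VB u; rewrite !ev3E; apply: identity_transfer => // w.
by rewrite -!ev3E.
Qed.

Variable P : pred (T * T * T).
Definition prod3_op f (a : 'I_(arity f) -> T * T * T) : T * T * T :=
  (ops (fun i => (a i).1.1), ops (fun i => (a i).1.2), ops (fun i => (a i).2)).
Hypothesis compatible :
  forall f (a : 'I_(arity f) -> T * T * T), (forall i, P (a i)) -> P (prod3_op a).

Definition Bsub : algebra S :=
  @Algebra S {u : T * T * T | P u}
    (fun f a => exist _ (prod3_op (fun i => proj1_sig (a i)))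
                        (compatible (fun i => proj2_sig (a i)))).

Lemma eval_Bsub (X : Type) (v : X -> Bsub) (t : term S X) :
  proj1_sig (eval Bsub v t) =
  (eval Afin (fun x => (proj1_sig (v x)).1.1) t,
   eval Afin (fun x => (proj1_sig (v x)).1.2) t,
   eval Afin (fun x => (proj1_sig (v x)).2) t).
Proof.
elim: t => [x|f args IH] /=; first by case: (proj1_sig (v x)) => [[]].
by congr (_, _, _); congr (ops _); apply: functional_extensionality => i;
  rewrite IH.
Qed.

Lemma Bsub_in_variety : Vfin Bsub.
Proof.
move=> e He v; apply: val_inj => /=; rewrite !eval_Bsub.
by rewrite (He (fun x => (proj1_sig (v x)).1.1)) (He (fun x => (proj1_sig (v x)).1.2))
           (He (fun x => (proj1_sig (v x)).2)).
Qed.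

(** Every ternary term operation of [Afin] preserves [P]: evaluate the term
    in [Bsub] and read off the coordinates. *)
Lemma ev3_preserves (t : term S 'I_3) (a b c : T * T * T) :
  P a -> P b -> P c ->
  P (ev3 (A := Afin) t a.1.1 b.1.1 c.1.1, ev3 (A := Afin) t a.1.2 b.1.2 c.1.2,
     ev3 (A := Afin) t a.2 b.2 c.2).
Proof.
move=> Pa Pb Pc.
have := proj2_sig (ev3 (A := Bsub) t (exist _ a Pa) (exist _ b Pb) (exist _ c Pc)).
rewrite /ev3 eval_Bsub.
have E (pr : T * T * T -> T) : (fun i => pr (proj1_sig (xyz (exist P a Pa)
    (exist P b Pb) (exist P c Pc) i))) = xyz (pr a) (pr b) (pr c).
  by apply: functional_extensionality => -[[|[|m]] Hm].
by rewrite (E (fun u => u.1.1)) (E (fun u => u.1.2)) (E (fun u => u.2)).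
Qed.

Definition coord_kernel (pr : T * T * T -> T) (u w : Bsub) : Prop :=
  pr (proj1_sig u) = pr (proj1_sig w).

Lemma coord_kernel_congruence (pr : T * T * T -> T) :
  (forall f (a : 'I_(arity f) -> T * T * T),
     pr (prod3_op a) = ops (fun i => pr (a i))) ->
  is_congruence (coord_kernel pr).
Proof.
rewrite /coord_kernel => pr_op; split; first by [].
split; first by move=> x y ->.
split; first by move=> x y z -> ->.
move=> f u w E /=; rewrite !pr_op; congr (ops _).
by apply: functional_extensionality => i; apply: E.
Qed.

End FiniteAlgebraVariety.

Definition sig3 : signature := @Signature nat (fun _ => 3).
Definition i0 : 'I_3 := @Ordinal 3 0 isT.
Definition i1 : 'I_3 := @Ordinal 3 1 isT.
Definition i2 : 'I_3 := @Ordinal 3 2 isT.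

Lemma xyz_comp (A B : Type) (f : A -> B) (w : 'I_3 -> A) (a : 'I_3) :
  xyz (f (w i0)) (f (w i1)) (f (w i2)) a = f (w a).
Proof. by case: a => -[|[|[|m]]] Ha //=; congr (f (w _)); apply: val_inj. Qed.

Section ChainAlgebra.
Variables (N : nat) (F : nat -> nat -> nat -> nat -> nat).
Hypothesis F_range : forall h x y z, x <= N -> y <= N -> z <= N -> F h x y z <= N.

Definition chain_ops (f : op sig3) (a : 'I_(arity f) -> 'I_N.+1) : 'I_N.+1 :=
  inord (F f (a i0) (a i1) (a i2)).
Notation chain := (Afin chain_ops).
Definition chain_variety := variety_of (identities_of chain_ops).

Definition op_term (h : nat) : term sig3 'I_3 :=
  @App sig3 'I_3 (h : op sig3) (fun i => Var i).

Lemma ev3_op_term h (x y z : 'I_N.+1) :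
  nat_of_ord (ev3 (A := chain) (op_term h) x y z) = F h x y z.
Proof. by rewrite /ev3 /= inordK // ltnS; apply: F_range; apply: leq_ord. Qed.

Lemma op_identity h h' (a1 b1 c1 a2 b2 c2 : 'I_3) B (VB : chain_variety B)
  (u : 'I_3 -> B) :
  (forall x y z, x <= N -> y <= N -> z <= N ->
     F h (xyz x y z a1) (xyz x y z b1) (xyz x y z c1) =
     F h' (xyz x y z a2) (xyz x y z b2) (xyz x y z c2)) ->
  ev3 (op_term h) (u a1) (u b1) (u c1) = ev3 (op_term h') (u a2) (u b2) (u c2).
Proof.
move=> E; apply: identity3_transfer VB u => w; apply: ord_inj.
rewrite !ev3_op_term.
have := E (w i0) (w i1) (w i2) (leq_ord _) (leq_ord _) (leq_ord _).
by rewrite !xyz_comp.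
Qed.

Lemma op_projection h (a b c j : 'I_3) B (VB : chain_variety B) (u : 'I_3 -> B) :
  (forall x y z, x <= N -> y <= N -> z <= N ->
     F h (xyz x y z a) (xyz x y z b) (xyz x y z c) = xyz x y z j) ->
  ev3 (op_term h) (u a) (u b) (u c) = u j.
Proof.
move=> E.
apply: (identity3_transfer (t2 := Var i0) (a2 := j) (b2 := j) (c2 := j)) VB u.
move=> w; apply: ord_inj; rewrite ev3_op_term.
have := E (w i0) (w i1) (w i2) (leq_ord _) (leq_ord _) (leq_ord _).
by rewrite !xyz_comp.
Qed.

Variable Q : nat -> nat -> nat -> bool.
Hypothesis F_preserves : forall h p1 p2 p3 q1 q2 q3 r1 r2 r3,
  p1 <= N -> p2 <= N -> p3 <= N -> q1 <= N -> q2 <= N -> q3 <= N ->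
  r1 <= N -> r2 <= N -> r3 <= N ->
  Q p1 q1 r1 -> Q p2 q2 r2 -> Q p3 q3 r3 ->
  Q (F h p1 p2 p3) (F h q1 q2 q3) (F h r1 r2 r3).

Definition chain_rel : pred ('I_N.+1 * 'I_N.+1 * 'I_N.+1) :=
  fun u => Q u.1.1 u.1.2 u.2.

Lemma chain_rel_compatible f (a : 'I_(arity f) -> 'I_N.+1 * 'I_N.+1 * 'I_N.+1) :
  (forall i, chain_rel (a i)) -> chain_rel (prod3_op chain_ops a).
Proof.
move=> H; rewrite /chain_rel /prod3_op /chain_ops /=.
rewrite !inordK ?ltnS ?F_range ?leq_ord //.
by apply: F_preserves; rewrite ?leq_ord //; apply: H.
Qed.

Definition chain_sub := Bsub chain_rel_compatible.

(** The values of a ternary term at the three "probes" [(0,0,N)], [(0,N,N)]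
    and [(0,N,0)] of the chain algebra; they are the columns of its value at
    the triples [(0,0,0)], [(0,N,N)], [(N,N,0)], hence lie in [Q]. *)
Definition probe_xxz (t : term sig3 'I_3) : nat :=
  ev3 (A := chain) t ord0 ord0 ord_max.
Definition probe_xzz (t : term sig3 'I_3) : nat :=
  ev3 (A := chain) t ord0 ord_max ord_max.
Definition probe_xzx (t : term sig3 'I_3) : nat :=
  ev3 (A := chain) t ord0 ord_max ord0.

Lemma probe_rel (t : term sig3 'I_3) : Q 0 0 0 -> Q 0 N N -> Q N N 0 ->
  Q (probe_xxz t) (probe_xzz t) (probe_xzx t).
Proof.
move=> Qx Qy Qz.
exact: (ev3_preserves chain_rel_compatible t (a := (ord0, ord0, ord0))
          (b := (ord0, ord_max, ord_max)) (c := (ord_max, ord_max, ord0))).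
Qed.

End ChainAlgebra.

Ltac case_ifs :=
  repeat match goal with
  | |- context [if ?b then _ else _] => let H := fresh in case H: b
  end.

(** The median of three naturals: [c] clamped to the interval between [a]
    and [b]. *)
Definition median (a b c : nat) := maxn (minn a b) (minn (maxn a b) c).

Lemma median_mono a b c a' b' c' :
  a <= a' -> b <= b' -> c <= c' -> median a b c <= median a' b' c'.
Proof. rewrite /median; lia. Qed.
Lemma median_lo a b c : minn a b <= median a b c. Proof. rewrite /median; lia. Qed.
Lemma median_hi a b c : median a b c <= maxn a b. Proof. rewrite /median; lia. Qed.
Lemma median_r a b c : (a <= b <= c) || (c <= b <= a) -> median a b c = b.
Proof. rewrite /median; lia. Qed.
Lemma median_l a b c : (b <= a <= c) || (c <= a <= b) -> median a b c = a.
Proof. rewrite /median; lia. Qed.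
Lemma median_xx a c : median a a c = a. Proof. rewrite /median; lia. Qed.
Lemma median_succ a b c : median a.+1 b.+1 c.+1 = (median a b c).+1.
Proof. rewrite /median; lia. Qed.
Lemma median_eq0 a b c : median a b c = 0 ->
  (a = 0 /\ b = 0) \/ (a = 0 /\ c = 0) \/ (b = 0 /\ c = 0).
Proof. rewrite /median; lia. Qed.

(** The [h]-th cut point between [x] and [z], for [1 <= h <= N+1]: a
    monotone path from [cutpt 1 = x] to [cutpt (N+1) = z] through the
    interval between them, advancing by at most one per step. *)
Definition cutpt (N h x z : nat) :=
  if x <= z then median x z h.-1 else median x z (N.+1 - h).

Lemma cut_between N h x z : 1 <= h <= N ->
  (x <= z -> x <= cutpt N h x z <= cutpt N h.+1 x z /\ cutpt N h.+1 x z <= z) /\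
  (z < x -> z <= cutpt N h.+1 x z <= cutpt N h x z /\ cutpt N h x z <= x).
Proof. rewrite /cutpt /median; case_ifs; lia. Qed.

Lemma cut_first N x z : x <= N -> cutpt N 1 x z = x.
Proof. rewrite /cutpt /median; case_ifs; lia. Qed.
Lemma cut_last N x z : z <= N -> cutpt N N.+1 x z = z.
Proof. rewrite /cutpt /median; case_ifs; lia. Qed.
Lemma cut_xx N h x : cutpt N h x x = x.
Proof. rewrite /cutpt /median; case_ifs; lia. Qed.
Lemma cut_mono N h x z x' z' : x <= x' -> z <= z' -> cutpt N h x z <= cutpt N h x' z'.
Proof. rewrite /cutpt /median; case_ifs; lia. Qed.
Lemma cut_eq0 N h x z : 1 <= h <= N.+1 -> cutpt N h x z = 0 ->
  (x = 0 /\ (z = 0 \/ h = 1)) \/ (z = 0 /\ h = N.+1).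
Proof. rewrite /cutpt /median; case_ifs; lia. Qed.
Lemma cut_succ_le N k k' x z : k <= k'.+1 -> k' <= k.+1 -> 1 <= k' ->
  cutpt N k x.+1 z.+1 <= (cutpt N k' x z).+1.
Proof. rewrite /cutpt ltnS /median; case_ifs; lia. Qed.
Lemma cut2_slow N x z x' z' :
  1 <= N -> x <= x' <= x.+1 -> z <= z' -> x' <= N -> z' <= N ->
  cutpt N 2 x' z' <= (cutpt N 2 x z).+1.
Proof. rewrite /cutpt /median; case_ifs; lia. Qed.
Lemma cutN_slow N x z x' z' :
  1 <= N -> x <= x' -> z <= z' <= z.+1 -> x' <= N -> z' <= N ->
  cutpt N N x' z' <= (cutpt N N x z).+1.
Proof. rewrite /cutpt /median; case_ifs; lia. Qed.

Definition dir_op (N h x y z : nat) :=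
  if h == 0 then x else if N < h then z
  else median (cutpt N h x z) (cutpt N h.+1 x z) y.

Lemma dir_op_mid N h x y z : 1 <= h <= N ->
  dir_op N h x y z = median (cutpt N h x z) (cutpt N h.+1 x z) y.
Proof.
move=> hN; rewrite /dir_op.
have -> : (h == 0) = false by lia.
by have -> : (N < h) = false by lia.
Qed.

Lemma dir_op_range N h x y z : x <= N -> y <= N -> z <= N -> dir_op N h x y z <= N.
Proof.
move=> hx hy hz; rewrite /dir_op /cutpt /median; case_ifs; lia.
Qed.

Lemma dir_op_xyx N h x y : dir_op N h x y x = x.
Proof. by rewrite /dir_op !cut_xx median_xx; case_ifs. Qed.

Lemma dir_op_mono N h x y z x' y' z' :
  x <= x' -> y <= y' -> z <= z' -> dir_op N h x y z <= dir_op N h x' y' z'.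
Proof.
move=> hx hy hz; rewrite /dir_op; case_ifs => //.
by apply: median_mono => //; apply: cut_mono.
Qed.

Lemma dir_op_xzz N h x z : 1 <= h <= N -> dir_op N h x z z = cutpt N h.+1 x z.
Proof.
move=> hN; rewrite dir_op_mid //; apply: median_r.
have [up dn] := cut_between x z hN.
by case: (leqP x z) => xz; [have := up xz | have := dn xz]; lia.
Qed.

Lemma dir_op_xxz N h x z : 1 <= h <= N -> dir_op N h x x z = cutpt N h x z.
Proof.
move=> hN; rewrite dir_op_mid //; apply: median_l.
have [up dn] := cut_between x z hN.
by case: (leqP x z) => xz; [have := up xz | have := dn xz]; lia.
Qed.

(** The directed Jonsson identities [d_h(x,z,z) = d_(h+1)(x,x,z)]: both
    sides are the [(h+1)]-th cut point of [x] and [z]. *)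
Lemma dir_op_directed N h x z : x <= N -> z <= N -> h <= N ->
  dir_op N h x z z = dir_op N h.+1 x x z.
Proof.
move=> hx hz hN; case: (posnP h) => [->|h_gt0].
  case: (posnP N) => [N0|N_gt0]; first by rewrite /dir_op N0 /=; lia.
  by rewrite dir_op_xxz ?cut_first.
rewrite dir_op_xzz ?h_gt0 //; case: (ltnP h N) => hN'.
  by rewrite dir_op_xxz // hN'.
have -> : h = N by lia.
by rewrite cut_last // /dir_op ltnSn.
Qed.

Definition sigma (p q r : nat) := (r == 0) ==> (q <= p.+1).
Definition rho (p q r : nat) := (p <= q) && sigma p q r.

Lemma dir_op_eq0 N h R1 R2 R3 : 1 <= h <= N -> R1 <= N -> R3 <= N ->
  dir_op N h R1 R2 R3 = 0 ->
  (R1 = 0 /\ R3 = 0) \/ (h = 1 /\ R1 = 0 /\ R2 = 0) \/ (h = N /\ R2 = 0 /\ R3 = 0).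
Proof.
move=> hN r1 r3; rewrite dir_op_mid // => /median_eq0.
have hN1 : 1 <= h <= N.+1 by lia.
have hN2 : 1 <= h.+1 <= N.+1 by lia.
move: (@cut_eq0 N h R1 R3 hN1) (@cut_eq0 N h.+1 R1 R3 hN2); lia.
Qed.

Lemma dir_op_slow_interior N h P1 P2 P3 Q1 Q2 Q3 : 1 <= h <= N ->
  P1 <= Q1 <= P1.+1 -> P2 <= Q2 -> P3 <= Q3 <= P3.+1 ->
  dir_op N h Q1 Q2 Q3 <= (dir_op N h P1 P2 P3).+1.
Proof.
move=> hN /andP[a1 b1] c2 /andP[a3 b3]; rewrite !dir_op_mid //.
have shift k k' : k <= k'.+1 -> k' <= k.+1 -> 1 <= k' ->
    cutpt N k Q1 Q3 <= (cutpt N k' P1 P3).+1.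
  by move=> *; apply: leq_trans (cut_mono _ _ b1 b3) _; apply: cut_succ_le.
have := shift h h; have := shift h h.+1; have := shift h.+1 h; have := shift h.+1 h.+1.
have := median_hi (cutpt N h Q1 Q3) (cutpt N h.+1 Q1 Q3) Q2.
have := median_lo (cutpt N h P1 P3) (cutpt N h.+1 P1 P3) P2.
lia.
Qed.

Lemma dir_op_slow_first N P1 P2 P3 Q1 Q2 Q3 : 1 <= N ->
  P1 <= Q1 <= P1.+1 -> P2 <= Q2 <= P2.+1 -> P3 <= Q3 -> Q1 <= N -> Q3 <= N ->
  dir_op N 1 Q1 Q2 Q3 <= (dir_op N 1 P1 P2 P3).+1.
Proof.
move=> N1 h1 h2 h3 q1 q3; rewrite !dir_op_mid ?N1 // !cut_first; try lia.
by rewrite -median_succ; apply: median_mono; try apply: cut2_slow; lia.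
Qed.

Lemma dir_op_slow_last N P1 P2 P3 Q1 Q2 Q3 : 1 <= N ->
  P1 <= Q1 -> P2 <= Q2 <= P2.+1 -> P3 <= Q3 <= P3.+1 -> Q1 <= N -> Q3 <= N ->
  dir_op N N Q1 Q2 Q3 <= (dir_op N N P1 P2 P3).+1.
Proof.
move=> N1 h1 h2 h3 q1 q3; rewrite !dir_op_mid ?N1 ?leqnn // !cut_last; try lia.
by rewrite -median_succ; apply: median_mono; try apply: cutN_slow; lia.
Qed.

Lemma dir_op_rho N h P1 P2 P3 Q1 Q2 Q3 R1 R2 R3 :
  Q1 <= N -> Q2 <= N -> Q3 <= N -> R1 <= N -> R3 <= N ->
  rho P1 Q1 R1 -> rho P2 Q2 R2 -> rho P3 Q3 R3 ->
  rho (dir_op N h P1 P2 P3) (dir_op N h Q1 Q2 Q3) (dir_op N h R1 R2 R3).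
Proof.
move=> q1 q2 q3 r1 r3 /andP[a1 /implyP b1] /andP[a2 /implyP b2] /andP[a3 /implyP b3].
rewrite /rho dir_op_mono //=; apply/implyP => /eqP R0.
case: (posnP h) => [h0|h_gt0]; first by move: R0 b1; rewrite h0 /dir_op /= => ->; apply.
case: (ltnP N h) => hN.
  by move: R0 b3; rewrite /dir_op (negbTE (lt0n_neq0 h_gt0)) hN => ->; apply.
have hN' : 1 <= h <= N by rewrite h_gt0.
case: (dir_op_eq0 hN' r1 r3 R0) => [[E1 E3]|[[-> [E1 E2]]|[-> [E2 E3]]]].
- by apply: dir_op_slow_interior; rewrite // ?a1 ?a3 ?b1 ?b3 ?E1 ?E3.
- by apply: dir_op_slow_first; rewrite // ?a1 ?a2 ?a3 ?b1 ?b2 ?E1 ?E2; lia.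
- by apply: dir_op_slow_last; rewrite // ?a1 ?a2 ?a3 ?b2 ?b3 ?E2 ?E3; lia.
Qed.

Definition blend (N L x z : nat) := maxn (minn x (N - L)) (minn z (maxn x L)).

Lemma blend_range N L x z : x <= N -> z <= N -> blend N L x z <= N.
Proof. rewrite /blend; lia. Qed.
Lemma blend_xx N L x : blend N L x x = x. Proof. rewrite /blend; lia. Qed.
Lemma blend_0 N x z : x <= N -> blend N 0 x z = x. Proof. rewrite /blend; lia. Qed.
Lemma blend_N N x z : z <= N -> blend N N x z = z. Proof. rewrite /blend; lia. Qed.
Lemma blend_eq0 N L x z : blend N L x z = 0 ->
  (x = 0 \/ N <= L) /\ (z = 0 \/ (x = 0 /\ L = 0)).
Proof. rewrite /blend; lia. Qed.
Lemma blend_shift N L L' x z x' z' :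
  L' <= L.+1 -> L <= L'.+1 -> x' <= x.+1 -> z' <= z.+1 ->
  blend N L' x' z' <= (blend N L x z).+1.
Proof. rewrite /blend; lia. Qed.
Lemma blend_1_bounds N x z : minn x (N - 1) <= blend N 1 x z <= maxn x 1.
Proof. rewrite /blend; lia. Qed.
Lemma blend_pred_bounds N x z : minn z N.-1 <= blend N N.-1 x z <= maxn z 1.
Proof. rewrite /blend; lia. Qed.

(** The largest even, resp. odd, number below [h] (with [odd_below 0 = 0]). *)
Definition even_below (h : nat) := h - odd h.
Definition odd_below (h : nat) := h - ~~ odd h.

Lemma below_bounds h :
  h.-1 <= even_below h <= h /\ h.-1 <= odd_below h <= h.
Proof. rewrite /even_below /odd_below; case: (odd h) => /=; lia. Qed.
Lemma even_below_succ h : ~~ odd h -> even_below h.+1 = even_below h.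
Proof. by rewrite /even_below /= => /negbTE ->; rewrite subn0 subn1. Qed.
Lemma odd_below_succ h : odd h -> odd_below h.+1 = odd_below h.
Proof. by rewrite /odd_below /= => ->; rewrite subn1 subn0. Qed.
Lemma odd_below_odd h : odd h -> odd_below h = h.
Proof. by rewrite /odd_below => ->; rewrite subn0. Qed.
Lemma even_below_odd h : odd h -> even_below h = h.-1.
Proof. by rewrite /even_below => ->; rewrite subn1. Qed.

(** The Jonsson operations on [{0..N}] for odd [N]: [t_0 = x], [t_h = z] for
    [h > N], and otherwise a blend of [x] and [z] whose parameter is the even
    number below [h], except on [y = z <> x] where it is the odd number below
    [h].  Hence [t_h(x,x,z)] changes only at odd steps and [t_h(x,z,z)] only
    at even ones. *)
Definition jon_op (N h x y z : nat) :=
  if h == 0 then x else if N < h then z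
  else if (y == z) && (y != x) then blend N (odd_below h) x z
  else blend N (even_below h) x z.

Lemma jon_op_mid N h x y z : 1 <= h <= N -> jon_op N h x y z =
  if (y == z) && (y != x) then blend N (odd_below h) x z else blend N (even_below h) x z.
Proof.
move=> hN; rewrite /jon_op.
have -> : (h == 0) = false by lia.
by have -> : (N < h) = false by lia.
Qed.

Lemma jon_op_range N h x y z : x <= N -> z <= N -> jon_op N h x y z <= N.
Proof. by move=> hx hz; rewrite /jon_op; case_ifs => //; apply: blend_range. Qed.

Lemma jon_op_xyx N h x y : jon_op N h x y x = x.
Proof. by rewrite /jon_op; case_ifs => //; rewrite blend_xx. Qed.

Lemma jon_op_xxz N h x z : odd N -> ~~ odd h -> h <= N -> x <= N ->
  jon_op N h x x z = jon_op N h.+1 x x z.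
Proof.
move=> oN eh hN hx.
have hN' : h < N by rewrite ltn_neqAle hN andbT; apply: contraNneq eh => ->.
rewrite (@jon_op_mid N h.+1) ?hN' // eqxx andbF.
case: (posnP h) => [->|h_gt0]; first by rewrite blend_0.
by rewrite jon_op_mid ?h_gt0 ?hN // eqxx andbF even_below_succ.
Qed.

Lemma jon_op_xzz N h x z : odd h -> h <= N -> z <= N ->
  jon_op N h x z z = jon_op N h.+1 x z z.
Proof.
move=> oh hN hz; case: (eqVneq z x) => [->|zx]; first by rewrite !jon_op_xyx.
have h_gt0 : 0 < h by case: h oh {hN}.
rewrite jon_op_mid ?h_gt0 // eqxx zx /=; case: (ltnP h N) => hN'.
  by rewrite jon_op_mid ?hN' // eqxx zx odd_below_succ.
move: oh; have {hN hN'} -> : h = N by lia.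
by move=> oN; rewrite odd_below_odd // blend_N // /jon_op ltnSn.
Qed.

Lemma jon_op_eq0 N h R1 R2 R3 : 1 <= h <= N -> jon_op N h R1 R2 R3 = 0 ->
  (R1 = 0 /\ R3 = 0) \/ (h = 1 /\ R1 = 0) \/ (h = N /\ R3 = 0).
Proof.
move=> hN; rewrite jon_op_mid //; have := below_bounds h.
by case: ifP => _ bounds /blend_eq0; lia.
Qed.

Lemma jon_op_slow_interior N h P1 P2 P3 Q1 Q2 Q3 : 1 <= h <= N ->
  Q1 <= P1.+1 -> Q3 <= P3.+1 -> jon_op N h Q1 Q2 Q3 <= (jon_op N h P1 P2 P3).+1.
Proof.
move=> hN q1 q3; rewrite !jon_op_mid //; have := below_bounds h.
by case: ifP => _; case: ifP => _ bounds; apply: blend_shift; lia.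
Qed.

Lemma jon_op_slow_first N P1 P2 P3 Q1 Q2 Q3 : 1 <= N -> Q1 <= P1.+1 ->
  P1 <= N -> Q1 <= N -> jon_op N 1 Q1 Q2 Q3 <= (jon_op N 1 P1 P2 P3).+1.
Proof.
move=> N1 q1 pN qN; rewrite !jon_op_mid ?N1 //.
have -> : even_below 1 = 0 by []; have -> : odd_below 1 = 1 by [].
rewrite !blend_0 //; move: (blend_1_bounds N P1 P3) (blend_1_bounds N Q1 Q3).
case_ifs; lia.
Qed.

Lemma jon_op_slow_last N P1 P2 P3 Q1 Q2 Q3 : odd N -> Q3 <= P3.+1 ->
  P3 <= N -> Q3 <= N -> jon_op N N Q1 Q2 Q3 <= (jon_op N N P1 P2 P3).+1.
Proof.
move=> oN q3 pN qN; have N1 := odd_gt0 oN.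
rewrite !jon_op_mid ?N1 ?leqnn // even_below_odd // odd_below_odd // !blend_N //.
move: (blend_pred_bounds N P1 P3) (blend_pred_bounds N Q1 Q3).
case_ifs; lia.
Qed.

Lemma jon_op_sigma N h P1 P2 P3 Q1 Q2 Q3 R1 R2 R3 : odd N ->
  P1 <= N -> P3 <= N -> Q1 <= N -> Q3 <= N ->
  sigma P1 Q1 R1 -> sigma P2 Q2 R2 -> sigma P3 Q3 R3 ->
  sigma (jon_op N h P1 P2 P3) (jon_op N h Q1 Q2 Q3) (jon_op N h R1 R2 R3).
Proof.
move=> oN p1 p3 q1 q3 /implyP b1 _ /implyP b3; apply/implyP => /eqP R0.
case: (posnP h) => [h0|h_gt0]; first by move: R0 b1; rewrite h0 /jon_op /= => ->; apply.
case: (ltnP N h) => hN.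
  by move: R0 b3; rewrite /jon_op (negbTE (lt0n_neq0 h_gt0)) hN => ->; apply.
have hN' : 1 <= h <= N by rewrite h_gt0.
case: (jon_op_eq0 hN' R0) => [[E1 E3]|[[-> E1]|[-> E3]]].
- by apply: jon_op_slow_interior; rewrite // ?b1 ?b3 ?E1 ?E3.
- by apply: jon_op_slow_first; rewrite ?b1 ?E1 ?odd_gt0.
- by apply: jon_op_slow_last; rewrite ?b3 ?E3.
Qed.

Lemma double_lt_odd a h : odd h -> 2 * a <= h -> 2 * a < h.
Proof.
move=> oh; rewrite leq_eqVlt => /orP[/eqP E|//].
by move: oh; rewrite -E oddM.
Qed.

(** Counting lemmas for the probes of a chain of terms [t_0, ..., t_k]:
    [p h = t_h(0,0,N)] and [q h = t_h(0,N,N)] start at [0] and stay close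
    ([q h <= p h + 1], and [p h <= q h] for [rho]); each kind of linking
    identity lets them advance only slowly, so [p k] stays small. *)
Section SequenceBounds.
Variables (p q : nat -> nat) (k : nat).
Hypothesis p0 : p 0 = 0.

(** Directed links [p (h+1) = q h]: [p] gains at most one per step. *)
Lemma directed_sequence_bound :
  q 0 = 0 -> (forall h, h < k -> p h.+1 = q h) ->
  (forall h, h <= k -> q h <= (p h).+1) -> 0 < k -> p k < k.
Proof.
move=> q0 pq qp k_gt0.
have q_bound h : h <= k -> q h <= h.
  elim: h => [|h IH] hk; first by rewrite q0.
  by have := qp h.+1 hk; rewrite pq //; have := IH (ltnW hk); lia.
have := q_bound k.-1 (leq_pred k); rewrite -pq ?prednK //; lia.
Qed.

Hypothesis pq_close : forall h, h <= k -> p h <= q h <= (p h).+1.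

(** Jonsson links: [p] is constant at even steps and [q] at odd steps, so
    [p] gains at most one every two steps. *)
Lemma jonsson_sequence_bound :
  (forall h, h < k -> if ~~ odd h then p h.+1 = p h else q h.+1 = q h) ->
  2 * p k <= k.
Proof.
move=> steps; suff p_bound h : h <= k -> 2 * p h <= h by apply: p_bound.
elim: h => [|h IH] hk; first by rewrite p0.
have := steps h hk; have := IH (ltnW hk); case: (boolP (odd h)) => oh /=.
  move=> /(double_lt_odd oh) IH' q_step.
  by have := pq_close hk; have := pq_close (ltnW hk); rewrite q_step; lia.
by move=> ? ->; lia.
Qed.

(** Alvin links ([p] constant at odd steps, [q] at even steps): likewise,
    and for even [k] the last step is a [p]-step, which gains nothing. *)
Lemma alvin_sequence_bound :
  q 0 = 0 -> (forall h, h < k -> if odd h then p h.+1 = p h else q h.+1 = q h) ->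
  ~~ odd k -> 0 < k -> 2 * p k < k.
Proof.
move=> q0 steps ek k_gt0.
have q_bound h : h <= k -> 2 * q h <= h.
  elim: h => [|h IH] hk; first by rewrite q0.
  have := steps h hk; have := IH (ltnW hk); case: (boolP (odd h)) => oh /=.
    move=> /(double_lt_odd oh) IH' p_step.
    by have := pq_close hk; have := pq_close (ltnW hk); rewrite p_step; lia.
  by move=> ? ->; lia.
have ok : odd k.-1 by move: ek; rewrite -{1}(prednK k_gt0) /= negbK.
have := steps k.-1; rewrite ok prednK // => /(_ (ltnSn _)) ->.
have := q_bound k.-1 (leq_pred k); have := pq_close (leq_pred k); lia.
Qed.

End SequenceBounds.

Section JonssonExample.
Variable N : nat.
Hypothesis N_odd : odd N.

Lemma jon_range h x y z : x <= N -> y <= N -> z <= N -> jon_op N h x y z <= N.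
Proof. by move=> hx _ hz; apply: jon_op_range. Qed.

Lemma jon_preserves_sigma h p1 p2 p3 q1 q2 q3 r1 r2 r3 :
  p1 <= N -> p2 <= N -> p3 <= N -> q1 <= N -> q2 <= N -> q3 <= N ->
  r1 <= N -> r2 <= N -> r3 <= N ->
  sigma p1 q1 r1 -> sigma p2 q2 r2 -> sigma p3 q3 r3 ->
  sigma (jon_op N h p1 p2 p3) (jon_op N h q1 q2 q3) (jon_op N h r1 r2 r3).
Proof. by move=> p1N _ p3N q1N _ q3N _ _ _; apply: jon_op_sigma. Qed.

Notation VJ := (chain_variety N (jon_op N)).

Lemma VJ_distributive : n_distributive VJ N.+1.
Proof.
exists op_term; split; [split; [|split]|].
- move=> B VB x y z.
  by apply: (op_projection (a := i0) (b := i1) (c := i2) (j := i0) jon_range VB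
                           (xyz x y z)).
- move=> B VB x y z.
  apply: (op_projection (a := i0) (b := i1) (c := i2) (j := i2) jon_range VB
                        (xyz x y z)).
  by move=> a b c _ _ _ /=; rewrite /jon_op ltnSn.
- move=> h _ B VB x y.
  apply: (op_projection (a := i0) (b := i1) (c := i0) (j := i0) jon_range VB
                        (xyz x y x)).
  by move=> a b c _ _ _ /=; rewrite jon_op_xyx.
- move=> h hN B VB x z; case: ifP => [eh|oh].
    apply: (op_identity (a1 := i0) (b1 := i0) (c1 := i2) (a2 := i0) (b2 := i0) (c2 := i2)
                        jon_range VB (xyz x x z)).
    by move=> a b c aN _ _ /=; apply: jon_op_xxz.
  apply: (op_identity (a1 := i0) (b1 := i2) (c1 := i2) (a2 := i0) (b2 := i2) (c2 := i2)
                      jon_range VB (xyz x z z)).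
  by move=> a b c _ _ cN /=; apply: jon_op_xzz; rewrite // -[odd h]negbK oh.
Qed.

(** Directed Jonsson terms [t_0, ..., t_N] would move the probe [t_h(0,0,N)]
    from [0] to [N] in [N] steps of which the first gains nothing. *)
Lemma VJ_not_directed : ~ n_directed_distributive VJ N.
Proof.
move=> [t [[t0 [tN t_xyx]] t_dir]].
have VA : VJ (Afin (@chain_ops N (jon_op N))) by apply: Afin_in_variety.
pose p h := probe_xxz N (jon_op N) (t h).
pose q h := probe_xzz N (jon_op N) (t h).
have sig h : sigma (p h) (q h) (probe_xzx N (jon_op N) (t h)).
  apply: (probe_rel jon_range jon_preserves_sigma);
  by rewrite /sigma ?leqnSn //; apply/implyP => /eqP ->.
have pN : p N = N by rewrite /p /probe_xxz /= (tN _ VA).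
suff : p N < N by rewrite pN ltnn.
apply: (directed_sequence_bound (q := q)).
- by rewrite /p /probe_xxz /= (t0 _ VA).
- by rewrite /q /probe_xzz /= (t0 _ VA).
- by move=> h hN; rewrite /p /q /probe_xxz /probe_xzz /= (t_dir h hN _ VA).
- move=> h hN; move: (sig h).
  by rewrite /sigma /probe_xzx (t_xyx h hN _ VA) => /implyP; apply.
- exact: odd_gt0.
Qed.

End JonssonExample.

Section DirectedExample.
Variable N : nat.
Hypothesis N_gt0 : 0 < N.

Lemma dir_range h x y z : x <= N -> y <= N -> z <= N -> dir_op N h x y z <= N.
Proof. exact: dir_op_range. Qed.

Lemma dir_preserves_rho h p1 p2 p3 q1 q2 q3 r1 r2 r3 :
  p1 <= N -> p2 <= N -> p3 <= N -> q1 <= N -> q2 <= N -> q3 <= N ->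
  r1 <= N -> r2 <= N -> r3 <= N ->
  rho p1 q1 r1 -> rho p2 q2 r2 -> rho p3 q3 r3 ->
  rho (dir_op N h p1 p2 p3) (dir_op N h q1 q2 q3) (dir_op N h r1 r2 r3).
Proof. by move=> _ _ _ q1N q2N q3N r1N _ r3N; apply: dir_op_rho. Qed.

Notation VD := (chain_variety N (dir_op N)).

Lemma VD_directed : n_directed_distributive VD N.+1.
Proof.
exists op_term; split; [split; [|split]|].
- move=> B VB x y z.
  by apply: (op_projection (a := i0) (b := i1) (c := i2) (j := i0) dir_range VB
                           (xyz x y z)).
- move=> B VB x y z.
  apply: (op_projection (a := i0) (b := i1) (c := i2) (j := i2) dir_range VB
                        (xyz x y z)).
  by move=> a b c _ _ _ /=; rewrite /dir_op ltnSn.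
- move=> h _ B VB x y.
  apply: (op_projection (a := i0) (b := i1) (c := i0) (j := i0) dir_range VB
                        (xyz x y x)).
  by move=> a b c _ _ _ /=; rewrite dir_op_xyx.
- move=> h hN B VB x z.
  apply: (op_identity (a1 := i0) (b1 := i2) (c1 := i2) (a2 := i0) (b2 := i0) (c2 := i2)
                      dir_range VB (xyz x z z)).
  by move=> a b c aN _ cN /=; apply: dir_op_directed.
Qed.

Lemma probes_close (t : term sig3 'I_3) : probe_xzx N (dir_op N) t = 0 ->
  probe_xxz N (dir_op N) t <= probe_xzz N (dir_op N) t <=
    (probe_xxz N (dir_op N) t).+1.
Proof.
have : rho (probe_xxz N (dir_op N) t) (probe_xzz N (dir_op N) t)
           (probe_xzx N (dir_op N) t).
  apply: (probe_rel dir_range dir_preserves_rho);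
  by rewrite /rho /sigma ?leqnn ?leqnSn //; apply/implyP => /eqP ->.
by rewrite /rho /sigma => /andP[-> /implyP le] r0; rewrite le ?r0.
Qed.

(** Alvin terms [t_0, ..., t_2N] or Jonsson terms [t_0, ..., t_(2N-1)] would
    move the probe [t_h(0,0,N)] from [0] to [N] too fast. *)
Lemma VD_not_alvin : ~ n_alvin VD (2 * N).
Proof.
move=> [t [[t0 [tk t_xyx]] t_alvin]].
have VA : VD (Afin (@chain_ops N (dir_op N))) by apply: Afin_in_variety.
pose p h := probe_xxz N (dir_op N) (t h).
pose q h := probe_xzz N (dir_op N) (t h).
have pk : p (2 * N) = N by rewrite /p /probe_xxz /= (tk _ VA).
suff : 2 * p (2 * N) < 2 * N by rewrite pk ltnn.
apply: (alvin_sequence_bound (q := q)).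
- by rewrite /p /probe_xxz /= (t0 _ VA).
- by move=> h hk; apply: probes_close; rewrite /probe_xzx (t_xyx h hk _ VA).
- by rewrite /q /probe_xzz /= (t0 _ VA).
- move=> h hk; have := t_alvin h hk _ VA ord0 ord_max.
  by rewrite /p /q /probe_xxz /probe_xzz; case: ifP => _ ->.
- by rewrite oddM.
- by rewrite muln_gt0.
Qed.

Lemma VD_not_distributive : ~ n_distributive VD (2 * N - 1).
Proof.
move=> [t [[t0 [tk t_xyx]] t_jonsson]].
have VA : VD (Afin (@chain_ops N (dir_op N))) by apply: Afin_in_variety.
pose p h := probe_xxz N (dir_op N) (t h).
pose q h := probe_xzz N (dir_op N) (t h).
have pk : p (2 * N - 1) = N by rewrite /p /probe_xxz /= (tk _ VA).
suff : 2 * p (2 * N - 1) <= 2 * N - 1 by rewrite pk; lia.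
apply: (jonsson_sequence_bound (q := q)).
- by rewrite /p /probe_xxz /= (t0 _ VA).
- by move=> h hk; apply: probes_close; rewrite /probe_xzx (t_xyx h hk _ VA).
- move=> h hk; have := t_jonsson h hk _ VA ord0 ord_max.
  by rewrite /p /q /probe_xxz /probe_xzz; case: ifP => _ ->.
Qed.

Notation BD := (chain_sub dir_range dir_preserves_rho).

Definition pc (u : BD) : nat := (proj1_sig u).1.1.
Definition qc (u : BD) : nat := (proj1_sig u).1.2.
Definition rc (u : BD) : nat := (proj1_sig u).2.

Lemma BD_rho (u : BD) : rho (pc u) (qc u) (rc u).
Proof. exact: (proj2_sig u). Qed.

Definition alpha (u w : BD) := (proj1_sig u).2 = (proj1_sig w).2.
Definition beta (u w : BD) := (proj1_sig u).1.1 = (proj1_sig w).1.1.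
Definition gamma (u w : BD) := (proj1_sig u).1.2 = (proj1_sig w).1.2.

Lemma kernels_congruences :
  [/\ is_congruence alpha, is_congruence beta & is_congruence gamma].
Proof.
by split; [apply: (@coord_kernel_congruence _ _ _ _ _ (fun u => u.2)) |
           apply: (@coord_kernel_congruence _ _ _ _ _ (fun u => u.1.1)) |
           apply: (@coord_kernel_congruence _ _ _ _ _ (fun u => u.1.2))].
Qed.

Lemma step_bound (u w : BD) :
  relint alpha (relcomp gamma beta) u w -> rc u = 0 -> rc w = 0 /\ pc w <= qc u.
Proof.
move=> [a_uw [m [g_um b_mw]]] ru; split; first by rewrite /rc -a_uw.
by have := BD_rho m; rewrite /pc /qc -b_mw -g_um => /andP[].
Qed.

(** The elements [x0 = (0,0,0)], [y0 = (0,N,N)], [z0 = (N,N,0)] of [BD]: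
    [x0 beta y0 gamma z0] and [x0 alpha z0]. *)
Definition x0 : BD := exist _ (ord0, ord0, ord0) isT.
Lemma y0_rho : @chain_rel N rho (ord0, ord_max, ord_max).
Proof. by rewrite /chain_rel /rho /sigma /=; apply/implyP => /eqP ->. Qed.
Definition y0 : BD := exist _ (ord0, ord_max, ord_max) y0_rho.
Lemma z0_rho : @chain_rel N rho (ord_max, ord_max, ord0).
Proof. by rewrite /chain_rel /rho /sigma /= leqnn leqnSn. Qed.
Definition z0 : BD := exist _ (ord_max, ord_max, ord0) z0_rho.

Lemma chain_bound j (w : BD) :
  relpow j.+1 (relint alpha (relcomp gamma beta)) x0 w -> rc w = 0 /\ pc w <= j.
Proof.
elim: j w => [|j IH] w; first by move=> /step_bound [].
move=> [u [/IH [ru pu] /step_bound [] // rw pw]]; split=> //.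
have := BD_rho u; rewrite /rho /sigma ru => /andP[_ qu].
by apply: leq_trans pw _; apply: leq_trans qu _.
Qed.

(** [(x0, z0)] lies in [alpha(beta o gamma)] but not in [(alpha(gamma o beta))^N],
    since [z0] has first coordinate [N]. *)
Lemma VD_congruence_identity_fails : ~ cong_id_holds VD N.
Proof.
move=> H; have [a_cong b_cong g_cong] := kernels_congruences.
have VB : VD BD by apply: Bsub_in_variety.
have x0z0 : relint alpha (relcomp beta gamma) x0 z0 by split; [|exists y0].
have := H BD VB alpha beta gamma a_cong b_cong g_cong x0 z0 x0z0.
rewrite -[X in relpow X](prednK N_gt0) => /chain_bound [_].
by rewrite /pc /=; lia.
Qed.

End DirectedExample.

Lemma jonsson_example (N : nat) : odd N ->
  exists (S : signature) (Sigma : equation S -> Prop),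
    locally_finite (variety_of Sigma) /\
    n_distributive (variety_of Sigma) N.+1 /\
    ~ n_directed_distributive (variety_of Sigma) N.
Proof.
move=> oN; exists sig3, (identities_of (@chain_ops N (jon_op N))).
split; first exact: variety_locally_finite.
by split; [apply: VJ_distributive | apply: VJ_not_directed].
Qed.

Lemma directed_example (N : nat) : 0 < N ->
  exists (S : signature) (Sigma : equation S -> Prop),
    [/\ locally_finite (variety_of Sigma),
        n_directed_distributive (variety_of Sigma) N.+1,
        ~ n_alvin (variety_of Sigma) (2 * N),
        ~ n_distributive (variety_of Sigma) (2 * N - 1)
      & ~ cong_id_holds (variety_of Sigma) N].
Proof.
move=> N_gt0; exists sig3, (identities_of (@chain_ops N (dir_op N))); split.
- exact: variety_locally_finite.
- exact: VD_directed.
- exact: VD_not_alvin.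
- exact: VD_not_distributive.
- exact: VD_congruence_identity_fails.
Qed.

Theorem theorem5p2 :
  (forall n : nat, 2 <= n -> ~~ odd n ->
     exists (S : signature) (Sigma : equation S -> Prop),
       locally_finite (variety_of Sigma) /\
       n_distributive (variety_of Sigma) n /\
       ~ n_directed_distributive (variety_of Sigma) (n - 1)) /\
  (forall n : nat, 2 <= n ->
     exists (S : signature) (Sigma : equation S -> Prop),
       locally_finite (variety_of Sigma) /\
       n_directed_distributive (variety_of Sigma) n /\
       ~ n_alvin (variety_of Sigma) (2 * n - 2) /\
       ~ n_distributive (variety_of Sigma) (2 * n - 3)) /\
  (forall n : nat, 2 <= n ->
     exists (S : signature) (Sigma : equation S -> Prop),
       locally_finite (variety_of Sigma) /\
       n_directed_distributive (variety_of Sigma) n /\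
       ~ cong_id_holds (variety_of Sigma) (n - 1)).
Proof.
split; [|split] => -[|N] // N_gt0.
- by rewrite subn1 /= negbK => /jonsson_example.
- have [S [Sigma [lf dir not_alvin not_distr _]]] := directed_example N_gt0.
  have -> : 2 * N.+1 - 2 = 2 * N by lia.
  have -> : 2 * N.+1 - 3 = 2 * N - 1 by lia.
  by exists S, Sigma.
- have [S [Sigma [lf dir _ _ not_cong]]] := directed_example N_gt0.
  by exists S, Sigma; rewrite subn1.
Qed.
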